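(* Let $C$ be a maximal independent set of the Kneser graph $\Gamma$ of flags of type $\{2,3\}$ of $\mathrm{PG}(6,q)$. (i) Every solid $S$ has a subspace $U$ such that for every plane $E$ of $S$: $(E,S)\in C$ if and only if $U\subseteq E$. (ii) For every plane $E$ there is a subspace $U$ containing $E$ such that for every solid $S$ on $E$: $(E,S)\in C$ if and only if $S\subseteq U$.
   Context: Dimensions are projective (planes 2, solids 3). A flag of type $\{2,3\}$ is a pair $(E,S)$ of a plane $E$ and a solid $S$ with $E\subseteq S$; in $\Gamma$ distinct flags $(E,S),(E',S')$ are adjacent iff $E\cap S'=\emptyset$ and $E'\cap S=\emptyset$. Maximal independent means independent and not properly contained in another independent set. *)

From HB Require Import structures.
From mathcomp Require Import all_boot all_algebra all_field.
Set Implicit Arguments. Unset Strict Implicit. Unset Printing Implicit Defensive.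
Import GRing.Theory.
Local Open Scope ring_scope.

(* PG(n-1,F) is modelled by the vector space 'rV[F]_n; projective subspaces of
   projective dimension d are vector subspaces of dimension d+1.
   Planes: \dim = 3;  solids: \dim = 4.  Projective intersection empty <-> vector
   intersection is 0. *)

Definition is_flag (F : fieldType) (vT : vectType F) (E S : {vspace vT}) : bool :=
  [&& \dim E == 3%N, \dim S == 4%N & (E <= S)%VS].

Definition flag_adjacent (F : fieldType) (vT : vectType F) (E S E' S' : {vspace vT}) : bool :=
  [&& (E, S) != (E', S'), (E :&: S' == 0)%VS & (E' :&: S == 0)%VS].

Definition independent_flags (F : fieldType) (vT : vectType F)
    (C : {vspace vT} -> {vspace vT} -> Prop) : Prop :=
  (forall E S, C E S -> is_flag E S) /\
  (forall E S E' S', C E S -> C E' S' -> ~~ flag_adjacent E S E' S').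

Definition maximal_independent_flags (F : fieldType) (vT : vectType F)
    (C : {vspace vT} -> {vspace vT} -> Prop) : Prop :=
  independent_flags C /\
  (forall D : {vspace vT} -> {vspace vT} -> Prop,
      independent_flags D -> (forall E S, C E S -> D E S) ->
      forall E S, D E S -> C E S).

(* Both parts follow from maximality alone: a flag that is opposite to no
   member of C lies in C.
   (i) Let U be the intersection of the planes E with (E, S) in C.  If
   U <= E <= S and (E', S') in C has E' disjoint from S, then every plane of C
   at S meets S' inside S :&: S', which is nonzero as 4 + 4 > 7.  Either
   S :&: S' has dimension at least 2 and meets the plane E of the solid S
   anyway, or it is a point lying on all these planes, hence on U and on E.
   (ii) Let U be the span of E and the solids S with (E, S) in C.  If (E', S')
   in C has S' disjoint from E, then every solid of C on E meets E', hence lies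
   in the 5-space E + E'; so does U, and a solid S <= U meets E'. *)
From HB Require Import structures.
From mathcomp Require Import all_boot all_algebra all_field.
From mathcomp Require Import zify boolp.

Set Implicit Arguments. Unset Strict Implicit. Unset Printing Implicit Defensive.

Section SubspaceLattice.
Variables (F : fieldType) (vT : vectType F).
Implicit Types (P : {vspace vT} -> Prop) (S U V W X : {vspace vT}).

Lemma vspace_lub_exists P :
  exists2 U, (forall X, P X -> (X <= U)%VS) &
    (forall W, (forall X, P X -> (X <= W)%VS) -> (U <= W)%VS).
Proof.
(* Upper bounds are closed under intersection, so one of minimal dimension is
   contained in all of them. *)
pose ub W := forall X, P X -> (X <= W)%VS.
have ex_ub_dim : exists n, `[< exists2 W, ub W & \dim W = n >].
  exists (\dim (fullv : {vspace vT})); apply/asboolP.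
  by exists fullv => // X _; apply: subvf.
case: (ex_minnP ex_ub_dim) => _ /asboolP [U ubU <-] minU.
exists U => // W ubW.
have ubUW : ub (U :&: W)%VS by move=> X PX; rewrite subv_cap ubU // ubW.
have le_dim : \dim U <= \dim (U :&: W) by apply: minU; apply/asboolP; exists (U :&: W)%VS.
have /eqP <- : (U :&: W)%VS == U by rewrite eqEdim capvSl le_dim.
exact: capvSr.
Qed.

Lemma vspace_glb_exists P :
  exists2 U, (forall X, P X -> (U <= X)%VS) &
    (forall W, (forall X, P X -> (W <= X)%VS) -> (W <= U)%VS).
Proof.
have [U lbU Umin] := vspace_lub_exists (fun W => forall X, P X -> (W <= X)%VS).
by exists U => // X PX; apply: Umin => W; apply.
Qed.

Lemma capv_neq0 S U V :
  (U <= S)%VS -> (V <= S)%VS -> \dim S < \dim U + \dim V -> (U :&: V != 0)%VS.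
Proof.
move=> US VS dimUV; rewrite -dimv_eq0 -lt0n.
have := dimvS (_ : (U + V <= S)%VS); rewrite subv_add US VS => /(_ isT).
have := dimv_sum_cap U V; lia.
Qed.

End SubspaceLattice.

Section FlagGeometry.
Variables (F : fieldType) (vT : vectType F).
Implicit Types (E S : {vspace vT}).

Lemma is_flagP E S :
  reflect [/\ \dim E = 3, \dim S = 4 & (E <= S)%VS] (is_flag E S).
Proof. by apply: (iffP and3P) => -[/eqP-> /eqP-> ->]. Qed.

Lemma flag_adjacent_sym E S E' S' :
  flag_adjacent E S E' S' = flag_adjacent E' S' E S.
Proof. by rewrite /flag_adjacent eq_sym; congr andb; exact: andbC. Qed.

Lemma not_flag_adjacent_capv E S E' S' :
  is_flag E S -> (E' :&: S = 0)%VS -> ~~ flag_adjacent E S E' S' ->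
  (E :&: S' != 0)%VS.
Proof.
move=> /is_flagP[dimE _ ES] E'S0; rewrite /flag_adjacent E'S0 eqxx andbT.
case/nandP => [/negPn/eqP[eE eS] | //]; subst E' S'.
by move: dimE; rewrite -(capv_idPl ES) E'S0 dimv0.
Qed.

Section MaximalIndependent.
Variable C : {vspace vT} -> {vspace vT} -> Prop.
Hypothesis maxC : maximal_independent_flags C.

Lemma C_is_flag E S : C E S -> is_flag E S.
Proof. by case: maxC => -[flagC _] _; apply: flagC. Qed.

Lemma C_meet E S E' S' :
  C E S -> C E' S' -> (E' :&: S = 0)%VS -> (E :&: S' != 0)%VS.
Proof.
case: maxC => -[_ indC] _ CES CE'S' E'S0.
exact: not_flag_adjacent_capv (C_is_flag CES) E'S0 (indC _ _ _ _ CES CE'S').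
Qed.

Lemma C_maximal E S :
  is_flag E S ->
  (forall E' S', C E' S' -> (E :&: S' = 0)%VS -> (E' :&: S = 0)%VS -> False) ->
  C E S.
Proof.
case: maxC => -[flagC indC] maximal flagES no_opposite.
pose D E0 S0 := C E0 S0 \/ E0 = E /\ S0 = S.
have not_adjacent E' S' : C E' S' -> ~~ flag_adjacent E S E' S'.
  move=> CE'S'; apply/negP => /and3P[_ /eqP ES'0 /eqP E'S0].
  exact: no_opposite CE'S' ES'0 E'S0.
apply: (maximal D); last by right.
- split=> [E0 S0 [/flagC | [-> ->]] // | E1 S1 E2 S2].
  case=> [CE1S1 | [-> ->]] [CE2S2 | [-> ->]].
  + exact: indC.
  + by rewrite flag_adjacent_sym; apply: not_adjacent.
  + exact: not_adjacent.
  + by rewrite /flag_adjacent eqxx.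
- by move=> E0 S0; left.
Qed.

Lemma solid_pencil_of_maximal S :
  dim vT <= 7 -> \dim S = 4 ->
  exists U, forall E, \dim E = 3 -> (E <= S)%VS -> (C E S <-> (U <= E)%VS).
Proof.
move=> dimvT dimS.
have [U UX Umax] := vspace_glb_exists (C^~ S).
exists U => E dimE ES; split=> [|UE]; first exact: UX.
apply: C_maximal => [|E' S' CE'S' ES'0 E'S0]; first by apply/is_flagP.
have /is_flagP[_ dimS' _] := C_is_flag CE'S'.
have meetS' X : C X S -> (X :&: S' != 0)%VS.
  by move=> CXS; apply: C_meet CXS CE'S' E'S0.
set W := (S :&: S')%VS.
have W0 : (W != 0)%VS.
  by apply: (capv_neq0 (subvf S) (subvf S')); rewrite dimvf dimS dimS'; lia.
case: (leqP 2 (\dim W)) => [dimW | dimW].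
  have EW0 : (E :&: W != 0)%VS.
    by apply: capv_neq0 ES (capvSl S S' : (W <= S)%VS) _; rewrite dimS dimE; lia.
  by apply: (negP EW0); rewrite -subv0 -ES'0 capvS ?capvSr.
have WX X : C X S -> (W <= X)%VS.
  move=> CXS; have /is_flagP[_ _ XS] := C_is_flag CXS.
  have XS'W : (X :&: S' <= W)%VS by apply: capvS XS (subvv S').
  have : (X :&: S')%VS == W.
    by rewrite eqEdim XS'W; move: (meetS' X CXS); rewrite -dimv_eq0; lia.
  by move/eqP <-; apply: capvSl.
apply: (negP W0); rewrite -subv0 -ES'0.
by rewrite subv_cap (subv_trans (Umax _ WX) UE) capvSr.
Qed.

Lemma plane_star_of_maximal E :
  \dim E = 3 ->
  exists U, (E <= U)%VS /\
    forall S, \dim S = 4 -> (E <= S)%VS -> (C E S <-> (S <= U)%VS).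
Proof.
move=> dimE.
have [V XV Vmin] := vspace_lub_exists (C E).
exists (E + V)%VS; split=> [|S dimS ES]; first exact: addvSl.
split=> [CES | SU]; first exact: subv_trans (XV _ CES) (addvSr E V).
apply: C_maximal => [|E' S' CE'S' ES'0 /eqP E'S0]; first by apply/is_flagP.
have /is_flagP[dimE' _ E'S'] := C_is_flag CE'S'.
set H := (E + E')%VS.
have dimH : \dim H = 6.
  rewrite dimv_disjoint_sum ?dimE ?dimE' //; apply/eqP.
  by rewrite -subv0 -ES'0 capvS.
have XH X : C E X -> (X <= H)%VS.
  move=> CEX; have /is_flagP[_ dimX EX] := C_is_flag CEX.
  have HXE' : (H <= X + E')%VS by apply: addvS EX (subvv E').
  have : H == (X + E')%VS.
    rewrite eqEdim HXE' dimH; have := dimv_sum_cap X E'.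
    by move: (C_meet CE'S' CEX ES'0); rewrite capvC -dimv_eq0; lia.
  by move/eqP ->; apply: addvSl.
have SH : (S <= H)%VS.
  by apply: subv_trans SU _; rewrite subv_add addvSl Vmin.
have SE'0 : (S :&: E' != 0)%VS.
  by apply: capv_neq0 SH (addvSr E E' : (E' <= H)%VS) _; rewrite dimH dimS dimE'.
by move: SE'0; rewrite capvC E'S0 => /negP[].
Qed.

End MaximalIndependent.
End FlagGeometry.

Theorem lemma6p1 (F : finFieldType)
    (C : {vspace 'rV[F]_7} -> {vspace 'rV[F]_7} -> Prop) :
  maximal_independent_flags C ->
  (forall S : {vspace 'rV[F]_7}, \dim S = 4%N ->
     exists U : {vspace 'rV[F]_7},
       forall E : {vspace 'rV[F]_7}, \dim E = 3%N -> (E <= S)%VS ->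
         (C E S <-> (U <= E)%VS)) /\
  (forall E : {vspace 'rV[F]_7}, \dim E = 3%N ->
     exists U : {vspace 'rV[F]_7}, (E <= U)%VS /\
       forall S : {vspace 'rV[F]_7}, \dim S = 4%N -> (E <= S)%VS ->
         (C E S <-> (S <= U)%VS)).
Proof.
move=> maxC; split; last exact: plane_star_of_maximal.
by move=> S; apply: solid_pencil_of_maximal; rewrite // dim_matrix.
Qed.
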